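(* For every $n \ge 1$, $$ f^+_n(x) = \sum_{w \in \mathcal{D}^B_n \cap B^*_n} x^{\mathrm{exc}_B(w)} \quad\text{and}\quad f^-_n(x) = \sum_{w \in \mathcal{D}^B_n \setminus B^*_n} x^{\mathrm{exc}_B(w)}. $$
   Context: A signed permutation of $[n]$ is a set $S = \{a_1, \dots, a_n\}$ with $a_i \in \{i, -i\}$, together with a bijection $w : S \to S$. $B_n$ is the set of all of them. - $a \in S$ is a $B$-excedance if $w(a) > a$, or if $a < 0$ and $w(a) = a$; $\mathrm{exc}_B(w)$ is their number. - $\mathcal{D}^B_n$ is the set of $w \in B_n$ having no $a \in S$ with $a > 0$ and $w(a) = a$. - $d^B_n(x) = \sum_{w \in \mathcal{D}^B_n} x^{\mathrm{exc}_B(w)}$. - For $w$ on the set $S$, $m_w$ denotes the minimum element of $S$ in the usual order of $\mathbb{Z}$, and $B^*_n = \{w \in B_n : w(m_w) > 0\}$. - $f^+_n, f^-_n$ are the unique real polynomials with $d^B_n = f^+_n + f^-_n$, $f^+_n(x) = x^n f^+_n(1/x)$ and $f^-_n(x) = x^{n+1} f^-_n(1/x)$. *)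

From HB Require Import structures.
From mathcomp Require Import all_boot all_order all_algebra all_fingroup.
Set Implicit Arguments. Unset Strict Implicit. Unset Printing Implicit Defensive.
Import Order.TTheory GRing.Theory Num.Theory.
Local Open Scope ring_scope.

(* A signed permutation of [n]: a sign choice s (s i = true means a_{i+1} = -(i+1))
   determining S = {a_1,...,a_n}, together with a bijection of S, encoded as
   the permutation p of indices: w(a_{i+1}) = a_{p(i)+1}. *)
Definition signedB (n : nat) := ({ffun 'I_n -> bool} * {perm 'I_n})%type.

Definition lab n (s : {ffun 'I_n -> bool}) (i : 'I_n) : int :=
  if s i then - (i.+1)%:Z else (i.+1)%:Z.

Definition wlab n (w : signedB n) (i : 'I_n) : int := lab w.1 (w.2 i).
Definition alab n (w : signedB n) (i : 'I_n) : int := lab w.1 i.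

Definition excB n (w : signedB n) : nat :=
  #|[set i : 'I_n | (alab w i < wlab w i) ||
                    ((alab w i < 0) && (wlab w i == alab w i))]|.

Definition derangB n (w : signedB n) : bool :=
  [forall i : 'I_n, ~~ ((0 < alab w i) && (wlab w i == alab w i))].

Definition BstarB n (w : signedB n) : bool :=
  [exists i : 'I_n, [forall j : 'I_n, alab w i <= alab w j] && (0 < wlab w i)].

Definition dB (R : realFieldType) n : {poly R} :=
  \sum_(w : signedB n | derangB w) 'X^(excB w).

Definition sym_deg (R : realFieldType) (k : nat) (f : {poly R}) : Prop :=
  forall x : R, x != 0 -> x ^+ k * f.[x^-1] = f.[x].

From HB Require Import structures.
From mathcomp Require Import all_boot all_order all_algebra all_fingroup.
From mathcomp Require Import zify.
Set Implicit Arguments. Unset Strict Implicit. Unset Printing Implicit Defensive.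
Import Order.TTheory GRing.Theory Num.Theory.

(* Uniqueness is pure algebra: a polynomial palindromic for two consecutive
   degrees vanishes off {0, 1}, hence is zero.

   Fix the signs of the letters and replace
   each element of S by its rank, so the m negative elements become the ranks
   0..m-1.  B-excedances, derangements and B^* become properties of a
   permutation t of {0..n-1} relative to the threshold m (the ranked model).
   Conjugating t by two explicit involutions reversing the blocks [0,m),
   [m,n-1] (and [1,m), [m,n-1] with 0 fixed) preserves derangements and B^*,
   and on derangements sends exc to n + [t not in B^*] - exc.  Summing over
   the sign vectors shows that exc is equidistributed with its complement to
   n (resp. n+1) on each part, which is palindromicity of P (resp. M). *)

Lemma card_indicator (T : finType) (P : pred T) :
  #|[set k | P k]| = \sum_k (P k : nat).
Proof.
rewrite -sum1dep_card big_mkcond /=; apply: eq_bigr => k _.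
by case: (P k).
Qed.

Lemma sum_indicator_at (T : finType) (i0 : T) (b : pred T) :
  \sum_k ((k == i0) && b k : nat) = b i0.
Proof. by rewrite (bigD1 i0) //= eqxx big1 ?addn0 // => k /negbTE ->. Qed.

Lemma perm_crossings (T : finType) (t : {perm T}) (P : pred T) :
  \sum_k (~~ P k && P (t k) : nat) = \sum_k (P k && ~~ P (t k) : nat).
Proof.
have img : \sum_k (P k : nat) = \sum_k (P (t k) : nat).
  by rewrite (reindex_inj (@perm_inj _ t)).
have splitP : \sum_k (P k : nat) =
    \sum_k (P k && P (t k) : nat) + \sum_k (P k && ~~ P (t k) : nat).
  by rewrite -big_split; apply: eq_bigr => k _ /=; case: (P k); case: (P (t k)).
have splitPt : \sum_k (P (t k) : nat) =
    \sum_k (P k && P (t k) : nat) + \sum_k (~~ P k && P (t k) : nat).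
  by rewrite -big_split; apply: eq_bigr => k _ /=; case: (P k); case: (P (t k)).
lia.
Qed.

Section RankedModel.
(* Letters are the ranks 0..n of the elements of S; the first m ranks are
   the negative letters. *)
Variables (n m : nat).
Hypothesis m_le : m <= n.+1.

Definition rexc_at (t : {perm 'I_n.+1}) (k : 'I_n.+1) : bool :=
  (k < t k) || ((k < m) && (t k == k)).
Definition rexc (t : {perm 'I_n.+1}) : nat := #|[set k | rexc_at t k]|.
Definition rderang (t : {perm 'I_n.+1}) : bool :=
  [forall k : 'I_n.+1, ~~ ((m <= k) && (t k == k))].
Definition rstar (t : {perm 'I_n.+1}) : bool := m <= t ord0.

(* [rev_out] reverses the blocks [0,m) and [m,n]; [rev_in] reverses the
   blocks [1,m) and [m,n] and fixes 0 (when m > 0). *)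
Definition rev_out (k : 'I_n.+1) : 'I_n.+1 :=
  inord (if k < m then m - k.+1 else n + m - k).
Definition rev_in (k : 'I_n.+1) : 'I_n.+1 :=
  inord (if k < m then (if k == 0 :> nat then 0 else m - k) else n + m - k).

Lemma rev_outP (k : 'I_n.+1) :
  [\/ k < m /\ rev_out k = m - k.+1 :> nat | m <= k /\ rev_out k = n + m - k :> nat].
Proof.
have := ltn_ord k; rewrite /rev_out.
by case: (ltnP k m) => side lt_k; [left | right]; rewrite inordK //; lia.
Qed.

Lemma rev_inP (k : 'I_n.+1) :
  [\/ [/\ k < m, k = 0 :> nat & rev_in k = 0 :> nat],
      [/\ k < m, k != 0 :> nat & rev_in k = m - k :> nat] |
      [/\ m <= k & rev_in k = n + m - k :> nat]].
Proof.
have := ltn_ord k; rewrite /rev_in.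
case: (ltnP k m) => side lt_k; last by apply: Or33; rewrite inordK //; lia.
case: eqP => k0; first by apply: Or31; rewrite inordK.
by apply: Or32; split => //; rewrite inordK //; lia.
Qed.

Lemma rev_outK : involutive rev_out.
Proof.
move=> k; apply: ord_inj; have := ltn_ord k.
by case: (rev_outP k) => -[? e1]; case: (rev_outP (rev_out k)) => -[? e2]; lia.
Qed.

Lemma rev_inK : involutive rev_in.
Proof.
move=> k; apply: ord_inj; have := ltn_ord k.
by case: (rev_inP k) => [[? ? e1]|[? ? e1]|[? e1]];
   case: (rev_inP (rev_in k)) => [[? ? e2]|[? ? e2]|[? e2]]; lia.
Qed.

Definition reflect_perm (t : {perm 'I_n.+1}) : {perm 'I_n.+1} :=
  (perm (can_inj rev_inK) * t * perm (can_inj rev_outK))%g.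

Lemma reflect_permE t k : reflect_perm t (rev_in k) = rev_out (t k).
Proof. by rewrite !permM !permE rev_inK. Qed.

Lemma reflect_perm_inj : injective reflect_perm.
Proof.
move=> t1 t2 e; apply/permP => k; apply: (can_inj rev_outK).
by rewrite -!reflect_permE e.
Qed.

Lemma reflect_fixed t k :
  (m <= rev_in k) && (reflect_perm t (rev_in k) == rev_in k) =
  (m <= k) && (t k == k).
Proof.
rewrite reflect_permE -!val_eqE /=; have := ltn_ord k; have := ltn_ord (t k).
by case: (rev_inP k) => [[? ? e1]|[? ? e1]|[? e1]];
   case: (rev_outP (t k)) => -[? e2]; rewrite e1 e2; lia.
Qed.

Lemma reflect_derang t : rderang (reflect_perm t) = rderang t.
Proof.
apply/forallP/forallP => h k; first by rewrite -reflect_fixed; apply: h.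
by rewrite -(rev_inK k) reflect_fixed; apply: h.
Qed.

(* The reflection fixes 0 (if m > 0) and preserves the sign of rev_out's
   argument, so it preserves B^*. *)
Lemma reflect_star t : rstar (reflect_perm t) = rstar t.
Proof.
rewrite /rstar; case: (posnP m) => [-> //|m_gt0].
have fix0 : rev_in ord0 = ord0 by apply: ord_inj; rewrite /rev_in /= m_gt0 inordK.
rewrite -{1}fix0 reflect_permE; have := ltn_ord (t ord0).
by case: (rev_outP (t ord0)) => -[? e]; rewrite e; lia.
Qed.

(* Pointwise bookkeeping of the excedance reflection at a non-fixed point:
   apart from the two correction terms for crossings of the threshold m and
   for the letter 0, exactly one of j and rev_in j is an excedance. *)
Lemma reflect_exc_at (t : {perm 'I_n.+1}) (j : 'I_n.+1) : ~~ ((m <= j) && (t j == j)) ->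
  rexc_at t j + rexc_at (reflect_perm t) (rev_in j)
    + (~~ (j < m) && (t j < m)) + ((j == ord0) && ((0 < m) && (m <= t j)))
  = 1 + ((j < m) && ~~ (t j < m)) + ((j == ord0) && (0 < m)).
Proof.
rewrite /rexc_at reflect_permE -!val_eqE /=.
have := ltn_ord j; have := ltn_ord (t j).
by case: (rev_inP j) => [[? ? e1]|[? ? e1]|[? e1]];
   case: (rev_outP (t j)) => -[? e2]; rewrite e1 e2; lia.
Qed.

Lemma reflect_exc (t : {perm 'I_n.+1}) :
  rderang t -> rexc (reflect_perm t) = n.+1 + ~~ rstar t - rexc t.
Proof.
move=> /forallP der.
have : \sum_(j < n.+1) (rexc_at t j + rexc_at (reflect_perm t) (rev_in j)
    + (~~ (j < m) && (t j < m)) + ((j == ord0) && ((0 < m) && (m <= t j))))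
  = \sum_(j < n.+1) (1 + ((j < m) && ~~ (t j < m)) + ((j == ord0) && (0 < m))).
  by apply: eq_bigr => j _; exact: reflect_exc_at.
rewrite !big_split /= perm_crossings sum1_card card_ord.
rewrite (sum_indicator_at ord0 (fun k => (0 < m) && (m <= t k))).
rewrite (sum_indicator_at ord0 (fun _ => 0 < m)).
have sum_t : \sum_j (rexc_at t j : nat) = rexc t by rewrite /rexc card_indicator.
have sum_reflect : \sum_j (rexc_at (reflect_perm t) (rev_in j) : nat) = rexc (reflect_perm t).
  by rewrite /rexc card_indicator [RHS](reindex_inj (can_inj rev_inK)).
rewrite sum_t sum_reflect /rstar.
set crossings := \sum_(k < n.+1) _.
by case: (posnP m) => [m0|m_gt0]; case: leqP; rewrite ?m0 //=; lia.
Qed.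

Lemma reflect_sum_sym (V : nmodType) (G : nat -> V) (b : bool) :
  (\sum_(t | rderang t && (rstar t == b)) G (rexc t) =
   \sum_(t | rderang t && (rstar t == b)) G (n.+1 + ~~ b - rexc t)%N)%R.
Proof.
rewrite (reindex_inj reflect_perm_inj); apply: eq_big => t.
  by rewrite reflect_derang reflect_star.
by rewrite reflect_derang reflect_star => /andP[der /eqP <-]; rewrite reflect_exc.
Qed.

End RankedModel.

Section Ranking.
Variables (n : nat) (s : {ffun 'I_n -> bool}).
Local Notation L := (lab s).

Lemma lab_inj : injective L.
Proof.
move=> i j; rewrite /lab => e; apply: ord_inj.
by move: e; case: (s i); case: (s j) => /= e; lia.
Qed.

Lemma lab_neg i : (L i < 0)%R = s i.
Proof. by rewrite /lab; case: (s i); lia. Qed.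

Lemma lab_pos i : (0 < L i)%R = ~~ s i.
Proof. by rewrite /lab; case: (s i) => /=; lia. Qed.

Definition below (i : 'I_n) : {set 'I_n} := [set j | (L j < L i)%R].

Lemma below_lt i : #|below i| < n.
Proof.
have proper_i : below i \proper [set: 'I_n].
  by apply/properP; split; [exact: subsetT | exists i; rewrite ?inE // ltxx].
by have := proper_card proper_i; rewrite cardsT card_ord.
Qed.

Definition rank (i : 'I_n) : 'I_n := Ordinal (below_lt i).

Lemma rank_mono i j : (L i < L j)%R -> rank i < rank j.
Proof.
move=> lt_ij; apply: proper_card; apply/properP; split.
  by apply/subsetP => k; rewrite !inE => lt_ki; exact: lt_trans lt_ki lt_ij.
by exists i; rewrite !inE ?ltxx.
Qed.

Lemma rank_lt i j : (rank i < rank j) = (L i < L j)%R.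
Proof.
apply/idP/idP => [lt_ij|]; last exact: rank_mono.
case: (ltrgtP (L i) (L j)) => // [gt_ij | /lab_inj eq_ij].
  by have := rank_mono gt_ij; rewrite ltnNge (ltnW lt_ij).
by move: lt_ij; rewrite eq_ij ltnn.
Qed.

Lemma rank_inj : injective rank.
Proof.
move=> i j e; apply: lab_inj.
by case: (ltrgtP (L i) (L j)) => // /rank_mono; rewrite e ltnn.
Qed.

Definition nneg : nat := #|[set j | s j]|.

Lemma nneg_le : nneg <= n.
Proof. by have := max_card [set j | s j]; rewrite card_ord. Qed.

Lemma rank_neg i : (rank i < nneg) = s i.
Proof.
rewrite /nneg /=; case neg_i: (s i).
  apply: proper_card; apply/properP; split.
    apply/subsetP => k; rewrite !inE -lab_neg => lt_ki.
    by apply: lt_trans lt_ki _; rewrite lab_neg.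
  by exists i; rewrite !inE ?ltxx.
apply/negbTE; rewrite -leqNgt; apply: subset_leq_card; apply/subsetP => k.
by rewrite !inE -lab_neg => lt_ki; apply: lt_trans lt_ki _; rewrite lab_pos neg_i.
Qed.

Lemma rank_min i : (rank i == 0 :> nat) = [forall j, (L i <= L j)%R].
Proof.
apply/eqP/forallP => [rk0 j | min_i].
  by rewrite leNgt; apply/negP => /rank_mono; rewrite rk0.
apply/eqP; rewrite /= cards_eq0; apply/eqP/setP => j.
by rewrite !inE ltNge min_i.
Qed.

Definition rank_perm : {perm 'I_n} := perm rank_inj.

Lemma rank_permE i : rank_perm i = rank i.
Proof. exact: permE. Qed.

Definition to_ranked (p : {perm 'I_n}) : {perm 'I_n} :=
  (rank_perm^-1 * p * rank_perm)%g.

Lemma to_rankedE p i : to_ranked p (rank i) = rank (p i).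
Proof. by rewrite -!rank_permE /to_ranked !permM permK. Qed.

Lemma to_ranked_inj : injective to_ranked.
Proof. by move=> p q; rewrite /to_ranked => /mulIg /mulgI. Qed.

End Ranking.

Section Transfer.
Variables (n : nat) (s : {ffun 'I_n.+1 -> bool}).
Local Notation m := (nneg s).
Local Notation L := (lab s).

Lemma exc_to_ranked p : excB ((s, p) : signedB n.+1) = rexc m (to_ranked s p).
Proof.
rewrite /excB /rexc -[RHS](card_preimset _ (@perm_inj _ (rank_perm s))).
apply: eq_card => i; rewrite !inE /alab /wlab /rexc_at /= !rank_permE to_rankedE.
by rewrite (inj_eq (@rank_inj _ s)) (inj_eq (@lab_inj _ s)) rank_lt rank_neg lab_neg.
Qed.

Lemma fixed_to_ranked (p : {perm 'I_n.+1}) i : (0 < L i)%R && (L (p i) == L i) =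
  (m <= rank s i) && (to_ranked s p (rank s i) == rank s i).
Proof.
by rewrite to_rankedE (inj_eq (@rank_inj _ s)) (inj_eq (@lab_inj _ s)) leqNgt rank_neg lab_pos.
Qed.

Lemma derang_to_ranked p : derangB ((s, p) : signedB n.+1) = rderang m (to_ranked s p).
Proof.
apply/forallP/forallP => der k; last by rewrite /alab /wlab /= fixed_to_ranked; apply: der.
by rewrite -(permKV (rank_perm s) k) rank_permE -fixed_to_ranked; apply: der.
Qed.

Lemma star_to_ranked p : BstarB ((s, p) : signedB n.+1) = rstar m (to_ranked s p).
Proof.
rewrite /BstarB /rstar /alab /wlab /=; apply/existsP/idP => [[i /andP[min_i pos_pi]] | star].
  have rk_i : rank s i = ord0 by apply: ord_inj; apply/eqP; rewrite rank_min.
  by rewrite -rk_i to_rankedE leqNgt rank_neg -lab_pos.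
pose i := ((rank_perm s)^-1 ord0)%g.
have rk_i : rank s i = ord0 by rewrite -rank_permE permKV.
exists i; apply/andP; split; first by rewrite -rank_min rk_i.
by rewrite lab_pos -rank_neg -leqNgt -to_rankedE rk_i.
Qed.

Lemma sum_to_ranked (V : nmodType) (F : nat -> V) (b : bool) :
  (\sum_(p | derangB ((s, p) : signedB n.+1) && (BstarB ((s, p) : signedB n.+1) == b))
      F (excB ((s, p) : signedB n.+1)) =
   \sum_(t : {perm 'I_n.+1} | rderang m t && (rstar m t == b)) F (rexc m t))%R.
Proof.
rewrite [RHS](reindex_inj (@to_ranked_inj _ s)); apply: eq_big => p.
  by rewrite derang_to_ranked star_to_ranked.
by rewrite exc_to_ranked.
Qed.

End Transfer.

Lemma sum_signedB (V : nmodType) n (P : pred (signedB n)) (F : signedB n -> V) :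
  (\sum_(w | P w) F w = \sum_s \sum_(p | P (s, p)) F (s, p))%R.
Proof. by rewrite pair_big_dep; apply: eq_big => -[s p]. Qed.

Lemma excB_sum_sym (V : nmodType) n (G : nat -> V) (b : bool) :
  (\sum_(w : signedB n.+1 | derangB w && (BstarB w == b)) G (excB w) =
   \sum_(w : signedB n.+1 | derangB w && (BstarB w == b)) G (n.+1 + ~~ b - excB w)%N)%R.
Proof.
rewrite !sum_signedB; apply: eq_bigr => s _.
rewrite (sum_to_ranked s G) (sum_to_ranked s (fun e => G (n.+1 + ~~ b - e)%N)).
exact: (reflect_sum_sym (nneg_le s) G b).
Qed.

Lemma excB_le n (w : signedB n) : excB w <= n.
Proof. by rewrite /excB; apply: leq_trans (max_card _) _; rewrite card_ord. Qed.

Local Open Scope ring_scope.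

Section Palindromes.
Variable R : realFieldType.

(* A polynomial vanishing at every x outside {0, 1} is zero: it has more
   roots (2, 3, ..., size g + 1) than its size allows. *)
Lemma poly_eq0_off01 (g : {poly R}) :
  (forall x : R, x != 0 -> x != 1 -> g.[x] = 0) -> g = 0.
Proof.
move=> vanish; apply/eqP/negPn/negP => g_neq0.
pose rs := [seq (i.+2)%:R : R | i <- iota 0 (size g)].
suff : (size rs < size g)%N by rewrite size_map size_iota ltnn.
apply: (max_poly_roots g_neq0).
  apply/allP => x /mapP [i _ ->]; apply/rootP; apply: vanish.
    by rewrite pnatr_eq0.
  by rewrite pnatr_eq1.
by rewrite map_inj_uniq ?iota_uniq // => i j /eqP; rewrite eqr_nat => /eqP [].
Qed.

Lemma sym_degB k (f g : {poly R}) : sym_deg k f -> sym_deg k g -> sym_deg k (f - g).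
Proof. by move=> sym_f sym_g x x0; rewrite !hornerD !hornerN mulrDr mulrN sym_f ?sym_g. Qed.

(* No nonzero polynomial is palindromic for two consecutive degrees:
   x^k g(1/x) = g(x) = x^(k+1) g(1/x) forces (x - 1) g(x) = 0. *)
Lemma sym_deg_succ_eq0 k (g : {poly R}) : sym_deg k g -> sym_deg k.+1 g -> g = 0.
Proof.
move=> sym_k sym_Sk; apply: poly_eq0_off01 => x x0 x1.
have : (x - 1) * g.[x] = 0.
  by rewrite mulrBl mul1r -{1}(sym_k x x0) mulrA -exprS sym_Sk // subrr.
by move/eqP; rewrite mulf_eq0 subr_eq0 (negbTE x1) => /eqP.
Qed.

Lemma sym_deg_monomials (I : finType) (A : pred I) (e : I -> nat) k :
  (forall w, A w -> (e w <= k)%N) ->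
  (forall G : nat -> R, \sum_(w | A w) G (e w) = \sum_(w | A w) G (k - e w)%N) ->
  sym_deg k (\sum_(w | A w) 'X^(e w) : {poly R}).
Proof.
move=> le_k equidistr x x0; rewrite !horner_sum mulr_sumr.
rewrite [RHS](eq_bigr (fun w => x ^+ e w)) => [|w _]; last by rewrite hornerXn.
rewrite (equidistr (fun i => x ^+ i)); apply: eq_bigr => w Aw.
by rewrite hornerXn -{1}(subnK (le_k w Aw)) exprD exprVn mulfK // expf_neq0.
Qed.

End Palindromes.

Theorem proposition4p1 (R : realFieldType) (n : nat) : (1 <= n)%N ->
  let P : {poly R} := \sum_(w : signedB n | derangB w && BstarB w) 'X^(excB w) in
  let M : {poly R} := \sum_(w : signedB n | derangB w && ~~ BstarB w) 'X^(excB w) in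
  (dB R n = P + M /\ sym_deg n P /\ sym_deg n.+1 M) /\
  (forall fp fm : {poly R},
     dB R n = fp + fm -> sym_deg n fp -> sym_deg n.+1 fm -> fp = P /\ fm = M).
Proof.
case: n => [//|n] _ P M.
pose Q b : {poly R} := \sum_(w : signedB n.+1 | derangB w && (BstarB w == b)) 'X^(excB w).
have symQ b : sym_deg (n.+1 + ~~ b) (Q b).
  apply: sym_deg_monomials => [w _|G]; last exact: excB_sum_sym.
  exact: leq_trans (excB_le w) (leq_addr _ _).
have PQ : P = Q true by apply: eq_bigl => w; rewrite eqb_id.
have MQ : M = Q false by apply: eq_bigl => w; rewrite eqbF_neg.
have symP : sym_deg n.+1 P by rewrite PQ; have := symQ true; rewrite addn0.
have symM : sym_deg n.+2 M by rewrite MQ; have := symQ false; rewrite addn1.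
have dB_split : dB R n.+1 = P + M by rewrite /dB (bigID (@BstarB n.+1)).
split=> // fp fm; rewrite dB_split => decomp sym_fp sym_fm.
have diff : fp - P = M - fm by rewrite -[M](addKr P) decomp addrA addrK addrC.
have fpP : fp - P = 0.
  by apply: (sym_deg_succ_eq0 (sym_degB sym_fp symP)); rewrite diff; exact: sym_degB.
by split; apply/eqP; rewrite ?(eq_sym fm) -subr_eq0 -?diff fpP.
Qed.
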